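(* Let $(V,d,k,q)$ be an instance of the individually fair $k$-center with outliers problem (IF$k$CO) as defined in the context. Then the basic algorithm (Algorithm 2) described in the context outputs a feasible solution $(S,O,\sigma)$ for this instance, i.e. $|S|\le k$ and $|O|\le q$.
   Context: IF$k$CO instance: a finite set $V$ with $|V|=n$, a metric $d$ on $V$ (nonnegative, symmetric, $d_{ii}=0$, triangle inequality), and integers $k\ge 1$ and $q\ge 0$. For $i\in V$, $NR_q(i)$ is the distance from $i$ to its $\lceil (n-q)/k\rceil$-th nearest neighbor in $V$, where $i$ counts as its own (first) nearest neighbor. A solution is $(S,O,\sigma)$ with $S,O\subseteq V$ and $\sigma:V\setminus O\to S$; feasible if $|S|\le k$ and $|O|\le q$. Algorithm 2: set $P:=V$, $S:=\emptyset$. While $P\neq\emptyset$ and $|S|<k$: pick $s\in P$ minimizing $NR_q(i)$ over $i\in P$; set $S:=S\cup\{s\}$ and $P:=\{i\in P: d_{is}>2\,NR_q(i)\}$. Then set $O:=P$ and, for each $i\in V\setminus O$, let $\sigma(i)$ be a center $h\in S$ minimizing $d_{ih}$. Output $(S,O,\sigma)$. *)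

From mathcomp Require Import all_boot all_order all_algebra.
Set Implicit Arguments. Unset Strict Implicit. Unset Printing Implicit Defensive.
Import Order.TTheory GRing.Theory Num.Theory.
Local Open Scope ring_scope.

Section IFkCO.
Variables (R : realFieldType) (V : finType) (d : V -> V -> R) (k q : nat).

Definition is_metric : Prop :=
  [/\ forall i j, 0 <= d i j,
      forall i j, d i j = d j i,
      forall i, d i i = 0 &
      forall i j l, d i l <= d i j + d j l].

(* ceil((n - q)/k), with n = |V|; (n - q) truncated at 0 *)
Definition nr_rank : nat := ((#|V| - q) + k.-1) %/ k.

(* NR_q(i): distance from i to its nr_rank-th nearest neighbour
   (i itself counting as first): the nr_rank-th smallest entry (1-based,
   with multiplicity) of the multiset {d i j | j in V}. *)
Definition NR (i : V) : R :=
  nth 0 (sort <=%R [seq d i j | j <- enum V]) nr_rank.-1.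

(* Run of the while loop of Algorithm 2: [alg2_loop P S O S'] means that,
   started in state (P, S), the loop may terminate in state (O, S')
   (for some resolution of the ties in the choice of s). *)
Inductive alg2_loop : {set V} -> {set V} -> {set V} -> {set V} -> Prop :=
| alg2_stop (P S : {set V}) :
    ~~ ((P != set0) && (#|S| < k)%N) -> alg2_loop P S P S
| alg2_step (P S : {set V}) (s : V) (O S' : {set V}) :
    P != set0 -> (#|S| < k)%N -> s \in P ->
    (forall i, i \in P -> NR s <= NR i) ->
    alg2_loop [set i in P | 2 * NR i < d i s] (s |: S) O S' ->
    alg2_loop P S O S'.

Definition alg2_output (S O : {set V}) (sigma : V -> V) : Prop :=
  alg2_loop [set: V] set0 O S /\
  (forall i, i \notin O ->
     sigma i \in S /\ (forall h, h \in S -> d i (sigma i) <= d i h)).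

Definition feasible (S O : {set V}) : Prop :=
  (#|S| <= k)%N /\ (#|O| <= q)%N.

End IFkCO.

(* Every chosen center s owns the ball B(s) of radius NR(s) around it, which
   contains at least ceil((n-q)/k) points.  A point j survives a round with
   center s only if d(j,s) > 2 NR(j), and s minimises NR over the surviving
   points; hence surviving points lie outside all balls chosen so far, and by
   the triangle inequality each new ball is disjoint from the earlier ones.
   If outliers remain when the loop stops, then k centers were chosen, so the
   outliers together with k disjoint balls fit into V, leaving at most
   n - k ceil((n-q)/k) <= q outliers. *)
From mathcomp Require Import all_boot all_order all_algebra zify lra.
Set Implicit Arguments. Unset Strict Implicit. Unset Printing Implicit Defensive.
Import Order.TTheory GRing.Theory Num.Theory.
Local Open Scope ring_scope.

Lemma ceil_divn_leq (m k : nat) : ((m + k.-1) %/ k <= m)%N.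
Proof.
case: k => [|k]; first by rewrite divn0.
by rewrite -ltnS ltn_divLR //=; nia.
Qed.

Lemma leq_mul_ceil_divn (m k : nat) : (0 < k)%N -> (m <= k * ((m + k.-1) %/ k))%N.
Proof.
move=> k_gt0; have := ltn_pmod (m + k.-1) k_gt0.
have := divn_eq (m + k.-1) k.
by case: k k_gt0 => // k _ /=; nia.
Qed.

Lemma count_le_nth_sort (disp : Order.disp_t) (T : orderType disp)
    (x0 : T) (s : seq T) (n : nat) :
  (n < size s)%N -> (n < count (fun x => x <= nth x0 (sort <=%O s) n)%O s)%N.
Proof.
move=> lt_ns; rewrite -(permP (permEl (perm_sort <=%O s))).
set t := sort _ s; set x := nth x0 t n.
have size_t : size t = size s by rewrite size_sort.
have : all (fun y => y <= x)%O (take n.+1 t).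
  apply/(all_nthP x0) => i; rewrite size_takel ?size_t // => lt_in.
  rewrite nth_take // /x; apply: (le_sorted_leq_nth x0 (sort_le_sorted s));
    rewrite ?inE ?size_t //.
  exact: leq_trans lt_in lt_ns.
rewrite all_count size_takel ?size_t // => /eqP take_le_x.
by rewrite -(cat_take_drop n.+1 t) count_cat take_le_x leq_addr.
Qed.

Lemma card_setU_disjoint (T : finType) (A B : {set T}) :
  [disjoint A & B] -> #|A :|: B| = (#|A| + #|B|)%N.
Proof. by move=> AB; rewrite cardsU disjoint_setI0 // cards0 subn0. Qed.

Section Algorithm2.
Variables (R : realFieldType) (V : finType) (d : V -> V -> R) (k q : nat).
Hypothesis d_metric : is_metric d.

Local Notation NR := (NR d k q).
Local Notation rank := (nr_rank V k q).

Lemma d_ge0 i j : 0 <= d i j. Proof. by case: d_metric. Qed.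
Lemma d_sym i j : d i j = d j i. Proof. by case: d_metric. Qed.
Lemma d_ii i : d i i = 0. Proof. by case: d_metric. Qed.
Lemma d_triangle i j l : d i l <= d i j + d j l. Proof. by case: d_metric. Qed.

Lemma NR_ge0 i : 0 <= NR i.
Proof.
rewrite /NR; set l := sort _ _.
have [lt_rl|] := ltnP rank.-1 (size l); last by move=> ?; rewrite nth_default.
have /mapP[j _ ->] : nth 0 l rank.-1 \in [seq d i j | j <- enum V].
  by rewrite -(mem_sort <=%R) mem_nth.
exact: d_ge0.
Qed.

Definition ball (s : V) : {set V} := [set j | d s j <= NR s].

Definition cover_balls (S : {set V}) : {set V} := \bigcup_(s in S) ball s.

Lemma card_ball_ge s : (rank <= #|ball s|)%N.
Proof.
case def_r: rank => [//|n].
have -> : #|ball s| = count (fun x => x <= NR s) [seq d s j | j <- enum V].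
  by rewrite enumT count_map cardsE cardE /enum_mem size_filter.
rewrite /NR def_r /=; apply: count_le_nth_sort.
rewrite size_map -cardE -ltnS -def_r ltnS.
exact: leq_trans (ceil_divn_leq _ _) (leq_subr _ _).
Qed.

(* [j] survives the round of the loop that picks the center [s]. *)
Definition far (s j : V) : Prop := NR s <= NR j /\ 2 * NR j < d j s.

Lemma far_irrefl s : ~ far s s.
Proof. by rewrite /far d_ii => -[_]; have := NR_ge0 s; lra. Qed.

Lemma notin_ball_far s j : far s j -> j \notin ball s.
Proof.
move=> [le_sj far_js]; rewrite inE -ltNge d_sym.
by have := NR_ge0 j; lra.
Qed.

Lemma disjoint_balls_far s s' : far s' s -> [disjoint ball s & ball s'].
Proof.
move=> [le_s's far_ss']; apply/pred0P => j /=; apply/negbTE/negP.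
rewrite !inE => /andP[js js'].
have := d_triangle s j s'; rewrite [d j s']d_sym; lra.
Qed.

Lemma disjoint_ball_cover_balls (S : {set V}) s :
  {in S, forall s', far s' s} -> [disjoint ball s & cover_balls S].
Proof. by move=> farSs; apply: bigcup_disjoint => s' /farSs/disjoint_balls_far. Qed.

Lemma disjoint_cover_balls (P S : {set V}) :
  {in S & P, forall s j, far s j} -> [disjoint P & cover_balls S].
Proof.
move=> farSP; apply: bigcup_disjoint => s sS; rewrite disjoints_subset.
by apply/subsetP => j jP; rewrite inE; apply/notin_ball_far/farSP.
Qed.

Definition alg2_inv (P S : {set V}) : Prop :=
  [/\ (#|S| <= k)%N, {in S & P, forall s j, far s j} &
      (#|S| * rank <= #|cover_balls S|)%N].

Lemma alg2_inv_init : alg2_inv [set: V] set0.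
Proof. by split; rewrite ?cards0 // => s j; rewrite inE. Qed.

Lemma alg2_inv_step (P S : {set V}) s :
  (#|S| < k)%N -> s \in P -> (forall i, i \in P -> NR s <= NR i) ->
  alg2_inv P S -> alg2_inv [set i in P | 2 * NR i < d i s] (s |: S).
Proof.
move=> lt_Sk sP s_min [_ farSP le_cover].
have s_notin_S : s \notin S.
  by apply/negP => sS; apply: (far_irrefl (farSP s s sS sP)).
split.
- by rewrite cardsU1 s_notin_S.
- move=> s' j; rewrite in_setU1 inE => /predU1P[->|s'S] /andP[jP far_js].
    by split; [apply: s_min|].
  exact: farSP.
- rewrite cardsU1 s_notin_S /cover_balls big_setU1 //= -/(cover_balls S).
  rewrite card_setU_disjoint ?mulSn ?leq_add ?card_ball_ge //.
  by apply: disjoint_ball_cover_balls => s' s'S; apply: farSP.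
Qed.

Lemma alg2_loop_inv P S O S' :
  alg2_loop d k q P S O S' -> alg2_inv P S ->
  alg2_inv O S' /\ ~~ ((O != set0) && (#|S'| < k)%N).
Proof.
elim=> [P0 S0 stop|P0 S0 s O0 S1 _ lt_Sk sP s_min _ IH] inv; first by [].
exact/IH/alg2_inv_step.
Qed.

Lemma alg2_inv_card (P S : {set V}) :
  alg2_inv P S -> (#|P| + #|S| * rank <= #|V|)%N.
Proof.
move=> [_ farSP le_cover]; apply: leq_trans (leq_add (leqnn _) le_cover) _.
by rewrite -card_setU_disjoint ?max_card ?disjoint_cover_balls.
Qed.

End Algorithm2.

Theorem lemma2 (R : realFieldType) (V : finType) (d : V -> V -> R) (k q : nat)
  (hd : is_metric d) (hk : (1 <= k)%N)
  (S O : {set V}) (sigma : V -> V) :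
  alg2_output d k q S O sigma -> feasible k q S O.
Proof.
case=> /(alg2_loop_inv hd) /(_ (alg2_inv_init d k q)) [inv_end stop] _.
have [le_Sk _ _] := inv_end.
split => //; have [->|O_neq0] := eqVneq O set0; first by rewrite cards0.
have card_S : #|S| = k.
  by apply/eqP; rewrite eqn_leq le_Sk leqNgt; move: stop; rewrite O_neq0.
have := alg2_inv_card hd inv_end.
have : (#|V| - q <= k * nr_rank V k q)%N := leq_mul_ceil_divn _ hk.
rewrite card_S; lia.
Qed.
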